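(* Let $M$ be an $n$-quasi-paving matroid of rank $n$ on $[d]$. Then $M$ is realizable over $\mathbb{C}$, and its matroid variety $V_M\subseteq\mathbb{C}^{nd}$ is irreducible.
   Context: Quasi-paving construction: given a positive integer $n\le d$ and a collection $\mathcal{H}=\{H_1,\ldots,H_k\}$ of subsets of $[d]$ any three of which have empty intersection, the $n$-quasi-paving matroid with representation $\mathcal{H}$ is the matroid on $[d]$ whose circuits are: (Type 1) the $(n-1)$-element subsets contained in the intersection of two distinct members of $\mathcal{H}$; (Type 2) the $n$-element subsets of some $H_i$ containing no Type 1 set; (Type 3) the $(n+1)$-element subsets containing no Type 1 or Type 2 set. A realization of a rank-$n$ matroid $M$ on $[d]$ is a tuple $(\gamma_1,\ldots,\gamma_d)$ of vectors in $\mathbb{C}^n$ (identified with a point of $\mathbb{C}^{nd}$) such that a set $\{i_1,\ldots,i_p\}$ is dependent in $M$ iff $\gamma_{i_1},\ldots,\gamma_{i_p}$ are linearly dependent; $\Gamma_M$ is the set of realizations and the matroid variety $V_M$ is its Zariski closure in $\mathbb{C}^{nd}$. $M$ is realizable if $\Gamma_M\neq\emptyset$. *)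

From mathcomp Require Import all_boot all_algebra.
From mathcomp Require Import Rstruct complex mpoly.
Set Implicit Arguments. Unset Strict Implicit. Unset Printing Implicit Defensive.
Import GRing.Theory.
Local Open Scope ring_scope.

Definition C : numClosedFieldType := complex Rdefinitions.R.

Section QuasiPaving.
Variables (d n : nat) (H : {set {set 'I_d}}).

Definition triple_empty : Prop :=
  forall A B D, A \in H -> B \in H -> D \in H ->
    A != B -> B != D -> A != D -> A :&: B :&: D = set0.

Definition qp_type1 (S : {set 'I_d}) : Prop :=
  #|S| = (n - 1)%N /\
  exists A B, [/\ A \in H, B \in H, A != B & S \subset A :&: B].

Definition qp_type2 (S : {set 'I_d}) : Prop :=
  #|S| = n /\ (exists A, A \in H /\ S \subset A) /\
  ~ (exists T : {set 'I_d}, T \subset S /\ qp_type1 T).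

Definition qp_type3 (S : {set 'I_d}) : Prop :=
  #|S| = n.+1 /\ ~ (exists T : {set 'I_d}, T \subset S /\ (qp_type1 T \/ qp_type2 T)).

Definition qp_circuit (S : {set 'I_d}) : Prop :=
  qp_type1 S \/ qp_type2 S \/ qp_type3 S.

Definition qp_dependent (S : {set 'I_d}) : Prop :=
  exists T : {set 'I_d}, T \subset S /\ qp_circuit T.

Definition qp_independent (S : {set 'I_d}) : Prop := ~ qp_dependent S.

Definition qp_has_rank (r : nat) : Prop :=
  (exists S, qp_independent S /\ #|S| = r) /\
  (forall S, qp_independent S -> (#|S| <= r)%N).

(* A point x of C^(n d) is identified with the n x d matrix whose j-th column
   is gamma_j (via vec_mx); a realization is such a point whose column
   vectors have exactly the dependencies of the matroid. *)
Definition point_mx (x : 'I_(n * d) -> C) : 'M[C]_(n, d) := vec_mx (\row_k x k).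

Definition cols_dependent (A : 'M[C]_(n, d)) (S : {set 'I_d}) : Prop :=
  exists c : 'I_d -> C,
    (exists j, j \in S /\ c j != 0) /\ \sum_(j in S) c j *: col j A = 0.

Definition qp_realization (x : 'I_(n * d) -> C) : Prop :=
  forall S : {set 'I_d}, qp_dependent S <-> cols_dependent (point_mx x) S.

End QuasiPaving.

Section Zariski.
Variable m : nat.

Definition zero_locus (P : {mpoly C[m]} -> Prop) : ('I_m -> C) -> Prop :=
  fun x => forall p, P p -> p.@[x] = 0.

Definition vanishing_ideal (V : ('I_m -> C) -> Prop) : {mpoly C[m]} -> Prop :=
  fun p => forall x, V x -> p.@[x] = 0.

Definition zariski_closure (V : ('I_m -> C) -> Prop) : ('I_m -> C) -> Prop :=
  zero_locus (vanishing_ideal V).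

Definition zariski_closed (V : ('I_m -> C) -> Prop) : Prop :=
  exists P, forall x, V x <-> zero_locus P x.

Definition zariski_irreducible (V : ('I_m -> C) -> Prop) : Prop :=
  (exists x, V x) /\
  forall Z1 Z2, zariski_closed Z1 -> zariski_closed Z2 ->
    (forall x, V x -> Z1 x \/ Z2 x) ->
    (forall x, V x -> Z1 x) \/ (forall x, V x -> Z2 x).

End Zariski.

From mathcomp Require Import all_boot all_algebra.
From mathcomp Require Import Rstruct complex mpoly zify.
From Stdlib Require Import FunctionalExtensionality Classical ClassicalEpsilon.
Set Implicit Arguments. Unset Strict Implicit. Unset Printing Implicit Defensive.
Import GRing.Theory Num.Theory.
Local Open Scope ring_scope.

(* Give every member A of H a normal row nu_A and every j a free column u_j,
   and let gamma_j be u_j projected into the common kernel of the nu_A with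
   j in A; there are at most two such A, as triple intersections are empty.
   Every realization arises this way: choose nu_A orthogonal to the columns
   indexed by A and pairwise independent, which is possible because two
   members whose columns span hyperplanes span different ones (an exchange
   argument for the circuits).  Conversely, gamma is a realization as soon as
   finitely many polynomials in the parameters do not vanish, and each of them
   is nonzero somewhere.  Since affine space is irreducible, the realization
   space is nonempty and its Zariski closure is irreducible. *)

Lemma exists_nonroot (p : {poly C}) : p != 0 -> exists z, ~~ root p z.
Proof.
move=> p0; pose zs := [seq (i%:R : C) | i <- iota 0 (size p)].
have zs_uniq : uniq zs.
  by rewrite map_inj_uniq ?iota_uniq // => i j /eqP; rewrite eqr_nat => /eqP.
apply: NNPP => /not_ex_all_not all_roots.
have zs_roots : all (root p) zs by apply/allP => z _; apply/negPn/negP/all_roots.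
by have := max_poly_roots p0 zs_roots zs_uniq; rewrite size_map size_iota ltnn.
Qed.

Section PolyOnLines.
Variable P : Type.

(* Polynomiality in the parameters is only ever used along affine lines. *)
Definition poly_on_lines (phi : (P -> C) -> C) : Prop :=
  forall a b : P -> C, exists p : {poly C}, forall z, phi (fun k => a k + z * b k) = p.[z].

Lemma poly_on_lines_horner phi (phip : (P -> {poly C}) -> {poly C}) :
  (forall t z, (phip t).[z] = phi (fun k => (t k).[z])) -> poly_on_lines phi.
Proof.
move=> phipE a b; exists (phip (fun k => (a k)%:P + (b k)%:P * 'X)) => z.
rewrite phipE; congr phi; apply: functional_extensionality => k.
by rewrite hornerD hornerC hornerM hornerC hornerX mulrC.
Qed.

Lemma poly_on_lines_cst c : poly_on_lines (fun=> c).
Proof. by move=> a b; exists c%:P => z; rewrite hornerC. Qed.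

Lemma poly_on_lines_prod (I : Type) (r : seq I) (phi : I -> (P -> C) -> C) :
  (forall i, poly_on_lines (phi i)) -> poly_on_lines (fun t => \prod_(i <- r) phi i t).
Proof.
move=> phi_poly a b; elim: r => [|i r [q qE]].
  by exists 1 => z; rewrite big_nil hornerC.
have [p pE] := phi_poly i a b.
by exists (p * q) => z; rewrite big_cons hornerM pE qE.
Qed.

Lemma poly_on_lines_mul_neq0 phi psi t1 t2 :
  poly_on_lines phi -> poly_on_lines psi -> phi t1 != 0 -> psi t2 != 0 ->
  exists t, phi t * psi t != 0.
Proof.
move=> phi_poly psi_poly phi_t1 psi_t2.
have [p pE] := phi_poly t1 (fun k => t2 k - t1 k).
have [q qE] := psi_poly t1 (fun k => t2 k - t1 k).
have line0 : (fun k => t1 k + 0 * (t2 k - t1 k)) = t1.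
  by apply: functional_extensionality => k; rewrite mul0r addr0.
have line1 : (fun k => t1 k + 1 * (t2 k - t1 k)) = t2.
  by apply: functional_extensionality => k; rewrite mul1r addrC subrK.
have p0 : p != 0 by apply: contraNneq phi_t1 => p0; rewrite -line0 pE p0 horner0.
have q0 : q != 0 by apply: contraNneq psi_t2 => q0; rewrite -line1 qE q0 horner0.
have [z pqz] := exists_nonroot (mulf_neq0 p0 q0).
by exists (fun k => t1 k + z * (t2 k - t1 k)); rewrite pE qE -hornerM.
Qed.

Lemma poly_on_lines_common_nonroot (I : finType) (phi : I -> (P -> C) -> C) :
  (forall i, poly_on_lines (phi i)) -> (forall i, exists t, phi i t != 0) ->
  exists t, forall i, phi i t != 0.
Proof.
move=> phi_poly phi_somewhere.
have [t prod_t] : exists t, \prod_(i <- enum I) phi i t != 0.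
  elim: (enum I) => [|i r [t prod_t]].
    by exists (fun _ => 0); rewrite big_nil oner_neq0.
  have [ti phi_ti] := phi_somewhere i.
  have prod_poly := poly_on_lines_prod r phi_poly.
  have [t' t'_neq0] := poly_on_lines_mul_neq0 (phi_poly i) prod_poly phi_ti prod_t.
  by exists t'; rewrite big_cons.
exists t => i; move: prod_t; rewrite big_enum /= (bigD1 i) //= mulf_eq0.
by case/norP.
Qed.

End PolyOnLines.

Lemma horner_mmap_polyC m (p : {mpoly C[m]}) (h : 'I_m -> {poly C}) z :
  (mmap polyC h p).[z] = p.@[fun k => (h k).[z]].
Proof.
rewrite /meval /mmap -horner_evalE rmorph_sum /=; apply: eq_bigr => u _.
rewrite rmorphM /= horner_evalE hornerC /mmap1 rmorph_prod; congr (_ * _).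
by apply: eq_bigr => i _; rewrite rmorphXn /= horner_evalE.
Qed.

Section ZariskiClosure.
Variables (m : nat) (V : ('I_m -> C) -> Prop).

Lemma subset_zariski_closure x : V x -> zariski_closure V x.
Proof. by move=> Vx p; apply. Qed.

Lemma not_sub_closed_separating Z : zariski_closed Z ->
  ~ (forall x, zariski_closure V x -> Z x) ->
  exists p : {mpoly C[m]}, (forall x, Z x -> p.@[x] = 0) /\ exists x, V x /\ p.@[x] != 0.
Proof.
case=> Ps ZE not_sub; apply: NNPP => no_sep; apply: not_sub => x Vx_closure.
apply/ZE => p Ps_p; apply: Vx_closure => y Vy; apply: NNPP => py.
by apply: no_sep; exists p; split => [z /ZE|]; [apply | exists y; split => //; apply/eqP].
Qed.

End ZariskiClosure.

Section ParametrizedClosure.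
Variables (m : nat) (P : Type) (I : finType).
Variables (f : (P -> C) -> 'I_m -> C) (cond : I -> (P -> C) -> C).
Variable V : ('I_m -> C) -> Prop.
Hypothesis f_poly : forall p : {mpoly C[m]}, poly_on_lines (fun t => p.@[f t]).
Hypothesis cond_poly : forall i, poly_on_lines (cond i).
Hypothesis cond_somewhere : forall i, exists t, cond i t != 0.
Hypothesis f_generic : forall t, (forall i, cond i t != 0) -> V (f t).
Hypothesis f_onto : forall x, V x -> exists t, f t = x.

Lemma param_nonempty : exists x, V x.
Proof.
have [t cond_t] := poly_on_lines_common_nonroot cond_poly cond_somewhere.
by exists (f t); apply: f_generic.
Qed.

(* If V lies in neither Z1 nor Z2, pick p_k vanishing on Z_k but not at some
   point of V; a parameter where p1 o f, p2 o f and all conditions are nonzero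
   maps to a point of V outside Z1 and Z2. *)
Lemma zariski_irreducible_param_closure : zariski_irreducible (zariski_closure V).
Proof.
split.
  by have [x Vx] := param_nonempty; exists x; apply: subset_zariski_closure.
move=> Z1 Z2 Z1_closed Z2_closed cover; apply: NNPP => /not_or_and [notV_Z1 notV_Z2].
have [p1 [p1_Z1 [x1 [Vx1 p1x1]]]] := not_sub_closed_separating Z1_closed notV_Z1.
have [p2 [p2_Z2 [x2 [Vx2 p2x2]]]] := not_sub_closed_separating Z2_closed notV_Z2.
have [t1 ft1] := f_onto Vx1; have [t2 ft2] := f_onto Vx2.
pose phi (o : option (option I)) t :=
  if o is Some o' then (if o' is Some i then cond i t else p2.@[f t]) else p1.@[f t].
have [t phi_t] : exists t, forall o, phi o t != 0.
  apply: poly_on_lines_common_nonroot.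
    by case=> [[i|]|]; [apply: cond_poly | apply: f_poly | apply: f_poly].
  case=> [[i|]|] /=; first exact: cond_somewhere.
  - by exists t2; rewrite ft2.
  - by exists t1; rewrite ft1.
have Vft : V (f t) by apply: f_generic => i; apply: (phi_t (Some (Some i))).
case: (cover _ (subset_zariski_closure Vft)) => [/p1_Z1 p1ft|/p2_Z2 p2ft].
  by move: (phi_t None); rewrite /= p1ft eqxx.
by move: (phi_t (Some None)); rewrite /= p2ft eqxx.
Qed.

End ParametrizedClosure.

Section RowSpaces.
Variable F : fieldType.

Lemma rank_adds_rV_notsub n m (v : 'rV[F]_n) (W : 'M[F]_(m, n)) :
  ~~ (v <= W)%MS -> \rank (v + W)%MS = (\rank W).+1.
Proof.
move=> vW; have v0 : v != 0 by apply: contraNneq vW => ->; apply: sub0mx.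
have cap0 : \rank (v :&: W)%MS = 0%N.
  apply: contraNeq vW; rewrite -lt0n => cap_pos.
  have : (v <= v :&: W)%MS.
    rewrite -(mxrank_leqif_sup (capmxSl _ _)) eqn_leq (mxrankS (capmxSl v W)).
    by rewrite rank_rV v0.
  by move/submx_trans; apply; apply: capmxSr.
by have := mxrank_sum_cap v W; rewrite cap0 rank_rV v0 addn0 add1n.
Qed.

Lemma addmxN_sub m1 m2 n (A B : 'M[F]_(m1, n)) (W : 'M[F]_(m2, n)) :
  (A <= W)%MS -> (B <= W)%MS -> (A - B <= W)%MS.
Proof. by move=> AW BW; rewrite addmx_sub // -scaleN1r scalemx_sub. Qed.

Lemma rV_sub_sym n (a b : 'rV[F]_n) : a != 0 -> b != 0 -> (b <= a)%MS -> (a <= b)%MS.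
Proof. by move=> a0 b0 ba; rewrite -(mxrank_leqif_sup ba) !rank_rV a0 b0. Qed.

Lemma row_free_col_mx_rV n (a b : 'rV[F]_n) :
  b != 0 -> ~~ (a <= b)%MS -> row_free (col_mx a b).
Proof. by move=> b0 ab; rewrite /row_free -addsmxE rank_adds_rV_notsub // rank_rV b0. Qed.

Lemma row_free_det_mul k m (M : 'M[F]_(k, m)) (P : 'M[F]_(m, k)) :
  \det (M *m P) != 0 -> row_free M.
Proof.
move=> detMP; have : row_free (M *m P) by rewrite row_free_unit unitmxE unitfE.
rewrite /row_free => /eqP rMP; rewrite eqn_leq rank_leq_row /= -{1}rMP.
exact: mxrankM_maxl.
Qed.

End RowSpaces.

Section ColumnFamilies.
Variables (d n : nat).
Implicit Types (G : 'M[C]_(n, d)) (S T : {set 'I_d}).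

Definition colrows (R : Type) (G : 'M[R]_(n, d)) S : 'M[R]_(#|S|, n) :=
  \matrix_(l, i) G i (enum_val l).

Lemma map_colrows (R R' : Type) (f : R -> R') (G : 'M[R]_(n, d)) S :
  map_mx f (colrows G S) = colrows (map_mx f G) S.
Proof. by apply/matrixP => l i; rewrite !mxE. Qed.

Definition tcol G j : 'rV[C]_n := (col j G)^T.

Lemma row_colrows G S l : row l (colrows G S) = tcol G (enum_val l).
Proof. by apply/rowP => i; rewrite !mxE. Qed.

Lemma tr_mul_colrows G S (v : 'rV[C]_#|S|) :
  (v *m colrows G S)^T = \sum_(l < #|S|) v 0 l *: col (enum_val l) G.
Proof. by apply/colP => i; rewrite !mxE summxE; apply: eq_bigr => l _; rewrite !mxE. Qed.

Lemma cols_dependentP G S : cols_dependent G S <-> ~~ row_free (colrows G S).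
Proof.
split.
  move=> [c [[j [jS cj]] sum_c]].
  pose v : 'rV[C]_#|S| := \row_l c (enum_val l).
  have vG : v *m colrows G S = 0.
    apply: trmx_inj; rewrite tr_mul_colrows trmx0 -[RHS]sum_c.
    by rewrite (big_enum_val (fun x => c x *: col x G)); apply: eq_bigr => l _; rewrite mxE.
  apply/negP => /row_free_inj free_G.
  have v0 : v = 0 by apply: free_G; rewrite /= vG mul0mx.
  move: cj; have := congr1 (fun w : 'rV_#|S| => w 0 (enum_rank_in jS j)) v0.
  by rewrite !mxE enum_rankK_in // => ->; rewrite eqxx.
move=> not_free; have : kermx (colrows G S) != 0 by rewrite kermx_eq0.
case/rowV0Pn => v /sub_kermxP vG /rV0Pn [l0 vl0].
pose c j := v 0 (enum_rank_in (enum_valP l0) j).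
exists c; split; first by exists (enum_val l0); rewrite /c enum_valK_in enum_valP.
rewrite (big_enum_val (fun x => c x *: col x G)) /= -[RHS]trmx0 -vG tr_mul_colrows.
by apply: eq_bigr => l _; rewrite /c enum_valK_in.
Qed.

Lemma cols_dependentS G S T : T \subset S -> cols_dependent G T -> cols_dependent G S.
Proof.
move=> sTS [c [[j [jT cj]] sum_c]].
exists (fun x => if x \in T then c x else 0); split.
  by exists j; rewrite (subsetP sTS) // jT.
rewrite (bigID (mem T)) /= [X in _ + X]big1 ?addr0; last first.
  by move=> x /andP[_ /negbTE ->]; rewrite scale0r.
rewrite -[RHS]sum_c; apply: eq_big => [x|x /andP[_ ->]//].
by case: (boolP (x \in T)) => xT; rewrite ?andbT ?andbF // (subsetP sTS).
Qed.

Lemma mul_tr_colrows_eq0 G S p (K : 'M[C]_(p, n)) :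
  (forall j, j \in S -> K *m col j G = 0) -> K *m (colrows G S)^T = 0.
Proof.
move=> KG; apply/matrixP => a l; rewrite !mxE.
have := congr1 (fun M : 'M_(p, 1) => M a 0) (KG _ (enum_valP l)).
by rewrite !mxE => KGal; rewrite -[RHS]KGal; apply: eq_bigr => i _; rewrite !mxE.
Qed.

Lemma rank_colrows_annihilated G S p (K : 'M[C]_(p, n)) :
  (forall j, j \in S -> K *m col j G = 0) -> (\rank (colrows G S) + \rank K <= n)%N.
Proof.
move=> /mul_tr_colrows_eq0 /sub_kermxP /mxrankS; rewrite mxrank_ker mxrank_tr.
by have := rank_leq_col (colrows G S); lia.
Qed.

Lemma tcol_sub G S j : j \in S -> (tcol G j <= colrows G S)%MS.
Proof. by move=> jS; rewrite -(enum_rankK_in jS jS) -row_colrows row_sub. Qed.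

Lemma colrows_subP G S m (W : 'M[C]_(m, n)) :
  reflect (forall j, j \in S -> (tcol G j <= W)%MS) (colrows G S <= W)%MS.
Proof.
apply: (iffP idP) => [GW j jS|GW]; first exact: submx_trans (tcol_sub G jS) GW.
by apply/row_subP => l; rewrite row_colrows GW // enum_valP.
Qed.

Lemma colrowsS G S T : S \subset T -> (colrows G S <= colrows G T)%MS.
Proof. by move=> /subsetP sST; apply/colrows_subP => j /sST; apply: tcol_sub. Qed.

Lemma zero_tcol_not_free G S j : j \in S -> tcol G j = 0 -> ~~ row_free (colrows G S).
Proof.
move=> jS Gj0; apply/negP => /row_free_inj free_G.
have : row (enum_rank_in jS j) (colrows G S) = 0 by rewrite row_colrows enum_rankK_in.
rewrite rowE -(mul0mx _ (colrows G S)) => /free_G.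
move/(congr1 (fun M : 'rV_#|S| => M 0 (enum_rank_in jS j))).
by rewrite !mxE !eqxx /= => /eqP; rewrite oner_eq0.
Qed.

Lemma exists_spanning_free_subfamily G T : exists S,
  [/\ S \subset T, row_free (colrows G S) & (colrows G T <= colrows G S)%MS].
Proof.
suff [S [sS free_S spanS]] : exists S, [/\ S \subset [set x in enum T],
    row_free (colrows G S) & forall j, j \in enum T -> (tcol G j <= colrows G S)%MS].
  exists S; split => //.
    by apply: subset_trans sS _; apply/subsetP => x; rewrite inE mem_enum.
  by apply/colrows_subP => j jT; rewrite spanS ?mem_enum.
elim: (enum T) => [|j s [S [sS free_S spanS]]].
  exists set0; split => //.
  by rewrite /row_free eqn_leq rank_leq_row /=; move: (\rank _) => r; rewrite cards0.
have sS' : S \subset [set x in j :: s].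
  by apply: subset_trans sS _; apply/subsetP => x; rewrite !inE => ->; rewrite orbT.
have [jS|jnS] := boolP (tcol G j <= colrows G S)%MS.
  by exists S; split => // i; rewrite inE => /orP[/eqP ->|]; last exact: spanS.
have j_notin_S : j \notin S by apply: contra jnS; apply: tcol_sub.
have span_jS : (colrows G (j |: S) :=: tcol G j + colrows G S)%MS.
  apply/eqmxP/andP; split.
    apply/colrows_subP => i; rewrite !inE => /orP[/eqP ->|iS]; first exact: addsmxSl.
    exact: submx_trans (tcol_sub G iS) (addsmxSr _ _).
  by rewrite addsmx_sub tcol_sub ?setU11 ?colrowsS ?subsetUr.
exists (j |: S); split.
- by rewrite subUset sS' andbT sub1set !inE eqxx.
- by rewrite /row_free span_jS rank_adds_rV_notsub // (eqP free_S) cardsU1 j_notin_S.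
- move=> i; rewrite inE => /orP[/eqP ->|iS]; first by rewrite tcol_sub ?setU11.
  exact: submx_trans (spanS _ iS) (colrowsS _ (subsetUr _ _)).
Qed.

Lemma exists_free_subfamily_rank G T : exists S,
  [/\ S \subset T, row_free (colrows G S) & #|S| = \rank (colrows G T)].
Proof.
have [S [sST free_S spanT]] := exists_spanning_free_subfamily G T.
exists S; split => //; rewrite -(eqP free_S); apply/eqP.
by rewrite eqn_leq (mxrankS spanT) mxrankS ?colrowsS.
Qed.

End ColumnFamilies.

Lemma exists_good_index (T : eqType) (bad : nat -> T -> bool) :
  (forall w i j, i != j -> bad i w -> bad j w -> False) ->
  forall (L : seq T) (cs : seq nat), uniq cs -> (size L < size cs)%N ->
  exists2 i, i \in cs & forall w, w \in L -> ~~ bad i w.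
Proof.
move=> bad_once; elim=> [|w L IHL] cs cs_uniq size_cs.
  by case: cs cs_uniq size_cs => // i cs _ _; exists i; rewrite ?inE ?eqxx.
have [/hasP[i i_cs bad_i]|/hasPn good_w] := boolP (has (bad^~ w) cs).
  have size_rem_cs : (size L < size (rem i cs))%N.
    by rewrite size_rem //; move: size_cs => /=; lia.
  have [k k_cs good_k] := IHL (rem i cs) (rem_uniq i cs_uniq) size_rem_cs.
  exists k; first exact: mem_rem k_cs.
  move=> w'; rewrite inE => /orP[/eqP ->|]; last exact: good_k.
  apply/negP => bad_k; apply: bad_once bad_k bad_i.
  by move: k_cs; rewrite (rem_filter _ cs_uniq) mem_filter => /andP[].
have [|k k_cs good_k] := IHL cs cs_uniq; first by move: size_cs => /=; lia.
by exists k => // w'; rewrite inE => /orP[/eqP ->|]; [apply: good_w | apply: good_k].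
Qed.

Lemma exists_row_outside_lines m n (K : 'M[C]_(m, n)) (L : seq 'rV[C]_n) :
  (1 < \rank K)%N ->
  exists v : 'rV[C]_n, [/\ (v <= K)%MS, v != 0 & forall w, w \in L -> ~~ (v <= w)%MS].
Proof.
move=> rK; have : ~~ (K <= (0 : 'M_n))%MS.
  by rewrite submx0 -mxrank_eq0 -lt0n (ltn_trans _ rK).
case/row_subPn => i; rewrite submx0; set x := row i K => x0.
have : ~~ (K <= x)%MS.
  by apply: contraL rK => /mxrankS rKx; rewrite -leqNgt (leq_trans rKx) ?rank_leq_row.
case/row_subPn => i'; set y := row i' K => y_notin_x.
(* Two of the rows x + k y, with x, y independent rows of K, never lie on a
   common line, so one of |L| + 2 of them avoids 0 and all of L. *)
pose bad (k : nat) (w : 'rV[C]_n) := ((x + k%:R *: y)%R <= w)%MS.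
have bad_once w k l : k != l -> bad k w -> bad l w -> False.
  move=> kl bad_k bad_l.
  have kl0 : (k%:R - l%:R : C) != 0 by rewrite subr_eq0 eqr_nat.
  have yw : (y <= w)%MS.
    have := addmxN_sub bad_k bad_l; rewrite opprD addrACA subrr add0r.
    by rewrite -scalerBl => /(scalemx_sub (k%:R - l%:R)^-1); rewrite scalerA mulVf ?scale1r.
  have xw : (x <= w)%MS by rewrite -(addrK (k%:R *: y) x) addmxN_sub ?scalemx_sub.
  have w0 : w != 0 by apply: contraNneq x0 => w0; move: xw; rewrite w0 => /submx0null ->.
  by move: y_notin_x; rewrite (submx_trans yw (rV_sub_sym w0 x0 xw)).
have size_L : (size (0%R :: L) < size (iota 0 (size L).+2))%N by rewrite size_iota.
have [k _ good_k] := exists_good_index bad_once (iota_uniq _ _) size_L.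
exists (x + k%:R *: y); split.
- by rewrite addmx_sub ?scalemx_sub ?row_sub.
- by apply: contraNneq (good_k 0 (mem_head _ _)) => xy0; rewrite /bad xy0 sub0mx.
- by move=> w wL; rewrite good_k // inE wL orbT.
Qed.

Section PairwiseFreeRows.
Variables (n : nat) (T : eqType) (Hs : seq T) (K : T -> 'M[C]_n).
Hypothesis K_neq0 : forall A, A \in Hs -> K A != 0.
Hypothesis K_cap_eq0 : forall A B, A \in Hs -> B \in Hs -> A != B ->
  \rank (K A) = 1%N -> \rank (K B) = 1%N -> (K A :&: K B)%MS = 0.

(* The pairs required to be free are those whose members lie in s or have
   rank-one K, whose row is forced up to a scalar. *)
Definition admissible_rows (s : seq T) (nu : T -> 'rV[C]_n) : Prop :=
  (forall A, A \in Hs -> (nu A <= K A)%MS /\ nu A != 0) /\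
  forall A B, A \in Hs -> B \in Hs -> A != B ->
    (A \in s) || (\rank (K A) == 1%N) -> (B \in s) || (\rank (K B) == 1%N) ->
    row_free (col_mx (nu A) (nu B)).

Lemma admissible_nz_rows : admissible_rows [::] (fun A => nz_row (K A)).
Proof.
have nz_rowP A : A \in Hs -> (nz_row (K A) <= K A)%MS /\ nz_row (K A) != 0.
  by move=> AH; rewrite nz_row_sub nz_row_eq0 K_neq0.
split=> // A B AH BH AB /eqP rA /eqP rB.
have [_ nzA] := nz_rowP A AH; have [_ nzB] := nz_rowP B BH.
apply: row_free_col_mx_rV => //; apply/negP => AinB.
have : (nz_row (K A) <= K A :&: K B)%MS.
  by rewrite sub_capmx nz_row_sub (submx_trans AinB) ?nz_row_sub.
by rewrite K_cap_eq0 // => /submx0null nzA0; rewrite nzA0 eqxx in nzA.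
Qed.

Lemma admissible_rows_cons s A0 nu :
  admissible_rows s nu -> exists nu', admissible_rows (A0 :: s) nu'.
Proof.
move=> [nu_K nu_free].
have [/andP[A0H rA0]|A0_forced] := boolP ((A0 \in Hs) && (\rank (K A0) != 1%N)); last first.
  exists nu; split=> // A B AH BH AB; rewrite !inE.
  have forced C0 : C0 \in Hs -> (C0 == A0) || (C0 \in s) || (\rank (K C0) == 1%N) ->
      (C0 \in s) || (\rank (K C0) == 1%N).
    move=> C0H; case: (eqVneq C0 A0) => [eC|_] //=.
    by move: A0_forced; rewrite -eC C0H negbK => ->; rewrite orbT.
  by move=> hA hB; apply: nu_free (forced _ AH hA) (forced _ BH hB).
have rK : (1 < \rank (K A0))%N.
  by move: rA0 (K_neq0 A0H); rewrite -mxrank_eq0; case: (\rank _) => [|[]].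
have [v [vK v0 v_out]] := exists_row_outside_lines [seq nu B | B <- Hs] rK.
exists (fun A => if A == A0 then v else nu A); split.
  by move=> A AH; case: eqP => [->|_]; last exact: nu_K.
move=> A B AH BH AB; rewrite !inE.
have [_ nuA0] := nu_K _ AH; have [_ nuB0] := nu_K _ BH.
case: (eqVneq A A0) => [eA|nA]; case: (eqVneq B A0) => [eB|nB] //=.
- by move: AB; rewrite eA eB eqxx.
- by move=> _ _; apply: row_free_col_mx_rV; rewrite // v_out ?map_f.
- move=> _ _; apply: row_free_col_mx_rV => //; apply/negP => /(rV_sub_sym v0 nuA0) vA.
  by move: (v_out _ (map_f nu AH)); rewrite vA.
- exact: nu_free.
Qed.

Lemma exists_pairwise_free_rows : exists nu : T -> 'rV[C]_n,
  (forall A, A \in Hs -> (nu A <= K A)%MS /\ nu A != 0) /\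
  (forall A B, A \in Hs -> B \in Hs -> A != B -> row_free (col_mx (nu A) (nu B))).
Proof.
have admissible_any s : exists nu, admissible_rows s nu.
  elim: s => [|A0 s [nu]]; first by exists (fun A => nz_row (K A)); apply: admissible_nz_rows.
  exact: admissible_rows_cons.
have [nu [nu_K nu_free]] := admissible_any Hs.
by exists nu; split=> // A B AH BH AB; apply: nu_free; rewrite ?AH ?BH.
Qed.

End PairwiseFreeRows.

Section QuasiPavingCircuits.
Variables (d n : nat) (H : {set {set 'I_d}}).
Implicit Types (S T I J A B : {set 'I_d}).
Local Notation dep := (@qp_dependent d n H).
Local Notation indep := (@qp_independent d n H).

Lemma qp_dependentS S T : S \subset T -> dep S -> dep T.
Proof. by move=> sST [U [sUS cU]]; exists U; split=> //; apply: subset_trans sST. Qed.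

Lemma qp_dependent_sub_member A S : A \in H -> S \subset A -> #|S| = n -> dep S.
Proof.
move=> AH sSA cS.
have [[T [sTS T1]]|no_T1] := classic (exists T, T \subset S /\ qp_type1 n H T).
  by exists T; split=> //; left.
by exists S; split=> //; right; left; split=> //; split=> //; exists A.
Qed.

Lemma qp_dependent_sub_cap A B T : A \in H -> B \in H -> A != B ->
  T \subset A :&: B -> #|T| = (n - 1)%N -> dep T.
Proof. by move=> AH BH AB sT cT; exists T; split=> //; left; split=> //; exists A, B. Qed.

Lemma qp_rank_gt1 A B : qp_has_rank n H n -> A \in H -> B \in H -> A != B -> (1 < n)%N.
Proof.
move=> [[S [indepS _]] _] AH BH AB; rewrite ltnNge; apply/negP => n_le1; apply: indepS.
exists set0; split; first exact: sub0set.
by left; split; [rewrite cards0; lia | exists A, B; rewrite sub0set].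
Qed.

Lemma card_exchange A I b : (0 < n)%N -> I \subset A -> #|I| = (n - 1)%N -> b \notin A ->
  #|b |: I| = n.
Proof.
move=> n_gt0 sIA cI bA; have bI : b \notin I by apply: contra bA; apply: (subsetP sIA).
by rewrite cardsU1 bI cI /=; lia.
Qed.

Section ExchangeStep.
Hypotheses (tri : triple_empty H) (n_gt0 : (0 < n)%N).
Variables (A B I J : {set 'I_d}) (b : 'I_d).
Hypotheses (AH : A \in H) (BH : B \in H) (AB : A != B).
Hypotheses (sIA : I \subset A) (cI : #|I| = (n - 1)%N) (indepI : indep I).
Hypotheses (sJB : J \subset B) (indepJ : indep J) (bJ : b \in J) (bA : b \notin A).

(* A Type 1 circuit in b |: I contains b and some i of I; b lies in B and in
   both members containing the circuit, so B is one of them and i lies in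
   three distinct members. *)
Lemma exchange_not_type1 T : T \subset b |: I -> ~ qp_type1 n H T.
Proof.
move=> sT T1; have [_ [C [D [CH DH CD sCD]]]] := T1.
have circuitT : qp_circuit n H T by left.
have [bT|bT] := boolP (b \in T); last first.
  apply: indepI; exists T; split=> //; apply/subsetP => x xT.
  by move: (subsetP sT x xT); rewrite !inE; case: eqP => [ex|//]; rewrite -ex xT in bT.
have [Tb0|[i iTb]] := set_0Vmem (T :\ b).
  apply: indepJ; exists T; split=> //; apply/subsetP => x xT.
  have [->//|xb] := eqVneq x b.
  have : x \in T :\ b by rewrite !inE xb xT.
  by rewrite Tb0 inE.
move: iTb; rewrite !inE => /andP[ib iT].
have iA : i \in A by apply: (subsetP sIA); move: (subsetP sT i iT); rewrite !inE (negbTE ib).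
move: (subsetP sCD i iT) (subsetP sCD b bT); rewrite !inE => /andP[iC iD] /andP[bC bD].
have bB : b \in B := subsetP sJB b bJ.
have B_CD : (B == C) || (B == D).
  apply: contraT; rewrite negb_or => /andP[BC BD].
  by move/setP/(_ b): (tri BH CH DH BC CD BD); rewrite !inE bB bC bD.
have [D' [D'H BD' iD' bD']] : exists D', [/\ D' \in H, B != D', i \in D' & b \in D'].
  by case/orP: B_CD => /eqP ->; [exists D | exists C; rewrite eq_sym].
have iB : i \in B by case/orP: B_CD => /eqP ->.
have AD' : A != D' by apply: contraNneq bA => ->.
by move/setP/(_ i): (tri AH BH D'H AB BD' AD'); rewrite !inE iA iB iD'.
Qed.

Lemma exchange_not_type2 T : T \subset b |: I -> ~ qp_type2 n H T.
Proof.
move=> sT [cT [[C [CH sTC]] _]].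
have eT : T = b |: I by apply/eqP; rewrite eqEcard sT cT (card_exchange n_gt0 sIA cI bA) /=.
have bC : b \in C by apply: (subsetP sTC); rewrite eT setU11.
have AC : A != C by apply: contraNneq bA => ->.
apply: indepI; apply: (qp_dependent_sub_cap AH CH AC) cI.
by rewrite subsetI sIA; apply: subset_trans sTC; rewrite eT subsetUr.
Qed.

Lemma qp_independent_exchange : indep (b |: I).
Proof.
move=> [T [sT [T1|[T2|[cT _]]]]]; first exact: exchange_not_type1 T1.
  exact: exchange_not_type2 T2.
by have := subset_leq_card sT; rewrite cT (card_exchange n_gt0 sIA cI bA) ltnn.
Qed.

End ExchangeStep.
End QuasiPavingCircuits.

(* Division-free projections of u along m (resp. the columns of M) onto the
   kernel of v (resp. N): the scalar v m (resp. the adjugate of N M) replaces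
   an inverse, so they are polynomial in all entries. *)
Section Projections.
Variables (R : comPzRingType) (n : nat).

Definition proj_row (v : 'rV[R]_n) (m u : 'cV[R]_n) : 'cV[R]_n :=
  (v *m m) 0 0 *: u - (v *m u) 0 0 *: m.

Definition proj_rows (N : 'M[R]_(2, n)) (M : 'M[R]_(n, 2)) (u : 'cV[R]_n) : 'cV[R]_n :=
  \det (N *m M) *: u - M *m (\adj (N *m M) *m (N *m u)).

Lemma proj_row_orth v m u : v *m proj_row v m u = 0.
Proof.
rewrite /proj_row mulmxBr -!scalemxAr; apply/rowP => k.
by rewrite !mxE ord1 mulrC subrr.
Qed.

Lemma proj_rows_orth N M u : N *m proj_rows N M u = 0.
Proof.
by rewrite /proj_rows mulmxBr -scalemxAr !mulmxA mul_mx_adj mul_scalar_mx -scalemxAl subrr.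
Qed.

Lemma proj_row_id v m u : v *m m = 1 -> v *m u = 0 -> proj_row v m u = u.
Proof. by move=> vm1 vu0; rewrite /proj_row vm1 vu0 !mxE /= scale0r subr0 scale1r. Qed.

Lemma proj_rows_id N M u : N *m M = 1 -> N *m u = 0 -> proj_rows N M u = u.
Proof. by move=> NM1 Nu0; rewrite /proj_rows NM1 Nu0 det1 scale1r !mulmx0 subr0. Qed.

End Projections.

Section MapProjections.
Variables (R S : comPzRingType) (g : {rmorphism R -> S}) (n : nat).

Lemma map_proj_row (v : 'rV[R]_n) m u :
  map_mx g (proj_row v m u) = proj_row (map_mx g v) (map_mx g m) (map_mx g u).
Proof. by rewrite /proj_row map_mxB !map_mxZ -!map_mxM !mxE. Qed.

Lemma map_proj_rows (N : 'M[R]_(2, n)) M u :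
  map_mx g (proj_rows N M u) = proj_rows (map_mx g N) (map_mx g M) (map_mx g u).
Proof. by rewrite /proj_rows map_mxB map_mxZ !map_mxM -det_map_mx map_mx_adj map_mxM. Qed.

End MapProjections.

Section Parametrization.
Variables (d n : nat) (H : {set {set 'I_d}}).

(* Coordinates: a normal row for every subset A (only members of H matter),
   and for every j a column u_j, a column m_j and an n x 2 matrix M_j. *)
Definition param_index : Type :=
  (({set 'I_d} * 'I_n) + ('I_d * 'I_n) + ('I_d * 'I_n) + ('I_d * ('I_n * 'I_2)))%type.

Definition through (j : 'I_d) : seq {set 'I_d} :=
  [seq A : {set 'I_d} <- enum H | j \in A].

Section Coordinates.
Variable R : comPzRingType.
Implicit Types t : param_index -> R.

Definition normal t A : 'rV[R]_n := \row_i t (inl (inl (inl (A, i)))).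
Definition base_col t j : 'cV[R]_n := \col_i t (inl (inl (inr (j, i)))).
Definition aux_col t j : 'cV[R]_n := \col_i t (inl (inr (j, i))).
Definition aux_mx t j : 'M[R]_(n, 2) := \matrix_(i, k) t (inr (j, (i, k))).

Definition mk_param (nu : {set 'I_d} -> 'rV[R]_n) (u m : 'I_d -> 'cV[R]_n)
    (M : 'I_d -> 'M[R]_(n, 2)) : param_index -> R :=
  fun k => match k with
  | inl (inl (inl (A, i))) => nu A 0 i
  | inl (inl (inr (j, i))) => u j i 0
  | inl (inr (j, i)) => m j i 0
  | inr (j, (i, k)) => M j i k
  end.

Lemma normal_mk nu u m M A : normal (mk_param nu u m M) A = nu A.
Proof. by apply/rowP => i; rewrite mxE. Qed.

Lemma base_col_mk nu u m M j : base_col (mk_param nu u m M) j = u j.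
Proof. by apply/colP => i; rewrite mxE. Qed.

Lemma aux_col_mk nu u m M j : aux_col (mk_param nu u m M) j = m j.
Proof. by apply/colP => i; rewrite mxE. Qed.

Lemma aux_mx_mk nu u m M j : aux_mx (mk_param nu u m M) j = M j.
Proof. by apply/matrixP => i k; rewrite mxE. Qed.

Definition param_col t j : 'cV[R]_n :=
  match through j with
  | [::] => base_col t j
  | [:: A] => proj_row (normal t A) (aux_col t j) (base_col t j)
  | A :: B :: _ =>
      proj_rows (col_mx (normal t A) (normal t B)) (aux_mx t j) (base_col t j)
  end.

Definition param_mx t : 'M[R]_(n, d) := \matrix_(i, j) param_col t j i 0.

Lemma col_param_mx t j : col j (param_mx t) = param_col t j.
Proof. by apply/colP => i; rewrite !mxE. Qed.

End Coordinates.

Lemma mem_through j A : (A \in through j) = (A \in H) && (j \in A).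
Proof. by rewrite mem_filter mem_enum andbC. Qed.

Lemma through_uniq j : uniq (through j).
Proof. by rewrite filter_uniq ?enum_uniq. Qed.

Lemma size_through (tri : triple_empty H) j : (size (through j) <= 2)%N.
Proof.
case E: (through j) (through_uniq j) => [|A1 [|A2 [|A3 l]]] //=.
rewrite !inE !negb_or => /and4P[/and3P[A12 A13 _] /andP[A23 _] _ _].
have /andP[H1 j1] : (A1 \in H) && (j \in A1) by rewrite -mem_through E !inE eqxx.
have /andP[H2 j2] : (A2 \in H) && (j \in A2) by rewrite -mem_through E !inE eqxx !orbT.
have /andP[H3 j3] : (A3 \in H) && (j \in A3) by rewrite -mem_through E !inE eqxx !orbT.
by move/setP/(_ j): (tri _ _ _ H1 H2 H3 A12 A23 A13); rewrite !inE j1 j2 j3.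
Qed.

Lemma normal_mul_param_col (tri : triple_empty H) (R : comPzRingType)
    (t : param_index -> R) A j :
  A \in H -> j \in A -> normal t A *m param_col t j = 0.
Proof.
move=> AH jA; have : A \in through j by rewrite mem_through AH jA.
rewrite /param_col; case: (through j) (size_through tri j) => [|A1 [|A2 [|A3 l]]] // _.
  by rewrite inE => /eqP ->; apply: proj_row_orth.
have : (col_mx (normal t A1) (normal t A2) : 'M_(1 + 1, n)) *m
    proj_rows (col_mx (normal t A1) (normal t A2)) (aux_mx t j) (base_col t j) = 0.
  exact: proj_rows_orth.
rewrite mul_col_mx => /eqP; rewrite col_mx_eq0 => /andP[/eqP N1 /eqP N2].
by rewrite !inE => /orP[] /eqP ->.
Qed.

Section MapParam.
Variables (R S : comPzRingType) (g : {rmorphism R -> S}).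

Lemma map_normal (t : param_index -> R) A : map_mx g (normal t A) = normal (g \o t) A.
Proof. by apply/rowP => i; rewrite !mxE. Qed.

Lemma map_param_col (t : param_index -> R) j :
  map_mx g (param_col t j) = param_col (g \o t) j.
Proof.
have eu : map_mx g (base_col t j) = base_col (g \o t) j by apply/colP => i; rewrite !mxE.
have em : map_mx g (aux_col t j) = aux_col (g \o t) j by apply/colP => i; rewrite !mxE.
have eM : map_mx g (aux_mx t j) = aux_mx (g \o t) j by apply/matrixP => i k; rewrite !mxE.
rewrite /param_col; case: (through j) => [|A [|B l]] //.
  by rewrite map_proj_row map_normal eu em.
rewrite map_proj_rows eu eM; congr proj_rows; apply/matrixP => i k.
by rewrite !mxE; case: splitP => ? _; rewrite !mxE.
Qed.

Lemma map_param_mx (t : param_index -> R) : map_mx g (param_mx t) = param_mx (g \o t).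
Proof. by apply/matrixP => i j; rewrite !mxE -map_param_col mxE. Qed.

End MapParam.
End Parametrization.

Section WeakRealizations.
Variables (d n : nat) (H : {set {set 'I_d}}).
Implicit Types (G : 'M[C]_(n, d)) (A B I S T : {set 'I_d}).
Local Notation dep := (@qp_dependent d n H).
Local Notation indep := (@qp_independent d n H).

Lemma param_mx_onto G (nu : {set 'I_d} -> 'rV[C]_n) :
  (forall A j, A \in H -> j \in A -> nu A *m col j G = 0) ->
  (forall A, A \in H -> nu A != 0) ->
  (forall A B, A \in H -> B \in H -> A != B -> row_free (col_mx (nu A) (nu B))) ->
  exists t, param_mx H t = G.
Proof.
move=> nuG nu0 nu_free.
pose fst_through j := head set0 (through H j).
pose snd_through j := head set0 (behead (through H j)).
pose t := mk_param nu (fun j => col j G) (fun j => pinvmx (nu (fst_through j)))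
  (fun j => pinvmx (col_mx (nu (fst_through j)) (nu (snd_through j)))).
suff param_colE j : param_col H t j = col j G.
  by exists t; apply/matrixP => i j; rewrite mxE param_colE mxE.
rewrite /param_col /t /fst_through /snd_through.
have through_j A : A \in through H j -> A \in H /\ j \in A by rewrite mem_through => /andP.
case E: (through H j) (through_uniq H j) through_j => [|A [|B l]] /= uniq_j through_j.
- by rewrite base_col_mk.
- have [AH jA] := through_j A (mem_head _ _).
  rewrite normal_mk aux_col_mk base_col_mk proj_row_id ?nuG //.
  by rewrite E /= mulmxVp // /row_free rank_rV nu0.
- have [AH jA] := through_j A (mem_head _ _).
  have [BH jB] : B \in H /\ j \in B by apply: through_j; rewrite !inE eqxx orbT.
  have AB : A != B by move: uniq_j; rewrite inE negb_or => /andP[/andP[]].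
  rewrite !normal_mk aux_mx_mk base_col_mk proj_rows_id //.
    by rewrite E /= mulmxVp //; apply: nu_free.
  have NG : (col_mx (nu A) (nu B) : 'M_(1 + 1, n)) *m col j G = 0.
    by rewrite mul_col_mx !nuG // col_mx0.
  exact: NG.
Qed.

Definition annihilator G A : 'M[C]_n := kermx (colrows G A)^T.

Lemma annihilator_mul_col G A (v : 'rV[C]_n) j :
  (v <= annihilator G A)%MS -> j \in A -> v *m col j G = 0.
Proof.
move=> /sub_kermxP vG jA; apply/colP => k; rewrite ord1.
have := congr1 (fun M : 'rV_#|A| => M 0 (enum_rank_in jA j)) vG.
by rewrite !mxE => vGj; rewrite -[RHS]vGj; apply: eq_bigr => i _; rewrite !mxE enum_rankK_in.
Qed.

Lemma rank_annihilator G A : \rank (annihilator G A) = (n - \rank (colrows G A))%N.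
Proof. by rewrite mxrank_ker mxrank_tr. Qed.

Lemma rank_colrows_corank1 G A :
  \rank (annihilator G A) = 1%N -> \rank (colrows G A) = (n - 1)%N.
Proof. by rewrite rank_annihilator; have := rank_leq_col (colrows G A); lia. Qed.

(* Realizations satisfy both conditions; so do the coordinate configurations
   of independent sets, whose columns outside the set vanish. *)
Definition weak_realization G : Prop :=
  (forall I, dep I -> ~~ row_free (colrows G I)) /\
  (forall I, indep I -> (forall j, j \in I -> tcol G j != 0) -> row_free (colrows G I)).

Lemma weak_realization_indep G I : weak_realization G -> row_free (colrows G I) -> indep I.
Proof. by move=> [G_dep _] free_I /G_dep; rewrite free_I. Qed.

Lemma annihilator_neq0 G A : weak_realization G -> A \in H -> annihilator G A != 0.
Proof.
move=> weakG AH; rewrite -mxrank_eq0 rank_annihilator subn_eq0; apply/negP => rA.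
have [S [sSA free_S cS]] := exists_free_subfamily_rank G A.
have cSn : #|S| = n by apply/eqP; rewrite eqn_leq cS rA rank_leq_col.
by move: (weakG.1 S (qp_dependent_sub_member AH sSA cSn)); rewrite free_S.
Qed.

Section TwoCorankOneMembers.
Hypotheses (n_gt0 : (0 < n)%N) (tri : triple_empty H).
Variables (G : 'M[C]_(n, d)) (A B : {set 'I_d}).
Hypotheses (weakG : weak_realization G) (AH : A \in H) (BH : B \in H) (AB : A != B).
Hypotheses (rA : \rank (annihilator G A) = 1%N) (rB : \rank (annihilator G B) = 1%N).

Lemma exists_free_basis_in_union :
  exists I, [/\ I \subset A :|: B, #|I| = n & row_free (colrows G I)].
Proof.
have [SA [sA free_SA cA]] := exists_free_subfamily_rank G A.
have [SB [sB free_SB cB]] := exists_free_subfamily_rank G B.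
rewrite rank_colrows_corank1 // in cA; rewrite rank_colrows_corank1 // in cB.
have indep_SA := weak_realization_indep weakG free_SA.
have indep_SB := weak_realization_indep weakG free_SB.
have /subsetPn [b bSB bA] : ~~ (SB \subset A).
  apply/negP => sBA; apply: indep_SB; apply: (qp_dependent_sub_cap AH BH AB) cB.
  by rewrite subsetI sBA sB.
have indep_I := qp_independent_exchange tri n_gt0 AH BH AB sA cA indep_SA sB indep_SB bSB bA.
exists (b |: SA); split.
- by rewrite subUset sub1set !inE (subsetP sB) ?orbT //= (subset_trans sA) ?subsetUl.
- exact: card_exchange n_gt0 sA cA bA.
- apply: weakG.2 => // j; rewrite !inE => /orP[/eqP ->|jSA].
    by apply: contraTneq free_SB; apply: zero_tcol_not_free.
  by apply: contraTneq free_SA; apply: zero_tcol_not_free.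
Qed.

Lemma annihilator_cap_eq0 : (annihilator G A :&: annihilator G B)%MS = 0.
Proof.
have [I [sI cI free_I]] := exists_free_basis_in_union.
apply/eqP; rewrite -submx0; apply/rV_subP => v v_cap.
have vI j : j \in I -> v *m col j G = 0.
  move/(subsetP sI); rewrite inE => /orP[jA|jB].
    by apply: annihilator_mul_col jA; apply: submx_trans v_cap (capmxSl _ _).
  by apply: annihilator_mul_col jB; apply: submx_trans v_cap (capmxSr _ _).
have := rank_colrows_annihilated vI; rewrite (eqP free_I) cI rank_rV.
by case: (v =P 0) => [->|_]; rewrite ?sub0mx // addn1 ltnn.
Qed.

End TwoCorankOneMembers.

Lemma weak_realization_param G : (0 < n)%N -> triple_empty H -> weak_realization G ->
  exists t, param_mx H t = G.
Proof.
move=> n_gt0 tri weakG.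
have [|A B AH BH AB rA rB|nu [nu_ann nu_free]] :=
  @exists_pairwise_free_rows n _ (enum H) (annihilator G).
- by move=> A; rewrite mem_enum; apply: annihilator_neq0.
- by rewrite !mem_enum in AH BH; apply: annihilator_cap_eq0.
apply: (@param_mx_onto G nu) => [A j AH jA|A AH|A B AH BH AB].
- by have [|nuA _] := nu_ann A; rewrite ?mem_enum // (annihilator_mul_col nuA jA).
- by have [|_ nz] := nu_ann A; rewrite ?mem_enum.
- by apply: nu_free; rewrite ?mem_enum.
Qed.

End WeakRealizations.

Section CoordinateConfigurations.
Variables (d n : nat) (H : {set {set 'I_d}}).
Implicit Types (S I : {set 'I_d}).

Definition coord_mx S : 'M[C]_(n, d) :=
  \matrix_(i, j) ((j \in S) && (i == index j (enum S) :> nat))%:R.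

Lemma tcol_coord_mx_notin S j : j \notin S -> tcol (coord_mx S) j = 0.
Proof. by move=> jS; apply/rowP => i; rewrite !mxE (negbTE jS). Qed.

Lemma index_enum_val S (l : 'I_#|S|) : index (enum_val l) (enum S) = l.
Proof. by rewrite (enum_val_nth (enum_val l)) index_uniq ?enum_uniq // -cardE ltn_ord. Qed.

Lemma coord_mx_free S I : (#|S| <= n)%N -> I \subset S -> row_free (colrows (coord_mx S) I).
Proof.
move=> Sn sIS; rewrite -kermx_eq0; apply/rowV0P => v /sub_kermxP vI.
apply/rowP => l0; rewrite mxE; set j0 := enum_val l0.
have j0S : j0 \in S by rewrite (subsetP sIS) ?enum_valP.
have j0_n : (index j0 (enum S) < n)%N by rewrite (leq_trans _ Sn) // cardE index_mem mem_enum.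
have := congr1 (fun M : 'rV_n => M 0 (Ordinal j0_n)) vI.
rewrite !mxE (bigD1 l0) //= big1 ?addr0 => [|l ll0]; first by rewrite !mxE j0S eqxx mulr1.
rewrite !mxE (subsetP sIS) ?enum_valP //=; case: eqP => [e|_]; last by rewrite mulr0.
move/negP: ll0; case; apply/eqP/enum_val_inj.
have lS : enum_val l \in enum S by rewrite mem_enum (subsetP sIS) ?enum_valP.
by rewrite -(nth_index j0 lS) -e nth_index ?mem_enum.
Qed.

Lemma weak_realization_coord_mx S :
  @qp_independent d n H S -> (#|S| <= n)%N -> weak_realization H (coord_mx S).
Proof.
move=> indepS Sn; split=> [I depI|I _ I_nz].
  have /subsetPn [j jI jS] : ~~ (I \subset S).
    by apply/negP => sIS; apply: indepS; apply: qp_dependentS sIS depI.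
  exact: zero_tcol_not_free jI (tcol_coord_mx_notin jS).
apply: coord_mx_free => //; apply/subsetP => j jI; apply: contraTT (I_nz j jI).
by move/tcol_coord_mx_notin ->; rewrite negbK.
Qed.

Lemma colrows_coord_mx S : colrows (coord_mx S) S = pid_mx #|S|.
Proof.
apply/matrixP => l i; rewrite !mxE enum_valP index_enum_val /= ltn_ord andbT.
by rewrite eq_sym.
Qed.

End CoordinateConfigurations.

Section RealizationPoints.
Variables (d n : nat) (H : {set {set 'I_d}}).

Definition mx_point (G : 'M[C]_(n, d)) : 'I_(n * d) -> C := fun k => mxvec G 0 k.

Lemma mx_pointK G : point_mx (mx_point G) = G.
Proof.
rewrite /point_mx; have -> : \row_k mx_point G k = mxvec G by apply/rowP => k; rewrite mxE.
exact: mxvecK.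
Qed.

Lemma point_mxK x : mx_point (point_mx x) = x.
Proof. by apply: functional_extensionality => k; rewrite /mx_point vec_mxK mxE. Qed.

Lemma weak_realization_point x : @qp_realization d n H x -> weak_realization H (point_mx x).
Proof.
move=> real_x; split=> [I /real_x /cols_dependentP //|I indepI _].
by apply/negPn/negP => /cols_dependentP /real_x.
Qed.

Lemma realization_param x : (0 < n)%N -> triple_empty H -> @qp_realization d n H x ->
  exists t, mx_point (param_mx H t) = x.
Proof.
move=> n_gt0 tri /weak_realization_point /(weak_realization_param n_gt0 tri) [t tx].
by exists t; rewrite tx point_mxK.
Qed.

End RealizationPoints.

Section Genericity.
Variables (d n' : nat) (H : {set {set 'I_d}}).
Local Notation n := n'.+1.
Local Notation indep := (@qp_independent d n H).

Definition normal_minor (R : comPzRingType) (t : param_index d n -> R) A B : R :=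
  \det (col_mx (normal t A) (normal t B) *m (pid_mx 2 : 'M[R]_(n, 1 + 1))).

Definition param_minor (R : comPzRingType) (t : param_index d n -> R) S : R :=
  \det (colrows (param_mx H t) S *m pid_mx #|S|).

Definition genericity (i : ({set 'I_d} * {set 'I_d}) + {set 'I_d})
    (t : param_index d n -> C) : C :=
  match i with
  | inl (A, B) => if (A \in H) && (B \in H) then
                    (if A == B then normal t A 0 ord0 else normal_minor t A B) else 1
  | inr X => if excluded_middle_informative (indep X) then param_minor t X else 1
  end.

Section GenericParameter.
Hypotheses (tri : triple_empty H) (rankH : qp_has_rank n H n).
Variable t : param_index d n -> C.
Hypothesis t_generic : forall i, genericity i t != 0.
Local Notation G := (param_mx H t).

Lemma generic_normal_neq0 A : A \in H -> normal t A != 0.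
Proof.
move=> AH; have := t_generic (inl (A, A)); rewrite /= AH eqxx /=.
by apply: contraNneq => ->; rewrite mxE.
Qed.

Lemma generic_normals_free A B : A \in H -> B \in H -> A != B ->
  row_free (col_mx (normal t A) (normal t B)).
Proof.
move=> AH BH AB; have := t_generic (inl (A, B)); rewrite /= AH BH (negbTE AB) /=.
exact: row_free_det_mul.
Qed.

Lemma generic_circuit_not_free T : qp_circuit n H T -> ~~ row_free (colrows G T).
Proof.
case=> [[cT [A [B [AH BH AB sAB]]]]|[[cT [[A [AH sTA]] _]]|[cT _]]].
- have n_gt1 := qp_rank_gt1 rankH AH BH AB.
  have NG j :
      j \in T -> (col_mx (normal t A) (normal t B) : 'M_(1 + 1, n)) *m col j G = 0.
    move=> /(subsetP sAB); rewrite inE => /andP[jA jB].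
    by rewrite mul_col_mx col_param_mx !normal_mul_param_col // col_mx0.
  have := rank_colrows_annihilated NG; rewrite (eqP (generic_normals_free AH BH AB)).
  by apply: contraTN => /eqP ->; rewrite cT; lia.
- have NG j : j \in T -> normal t A *m col j G = 0.
    by move=> /(subsetP sTA) jA; rewrite col_param_mx normal_mul_param_col.
  have := rank_colrows_annihilated NG; rewrite rank_rV generic_normal_neq0 //.
  by apply: contraTN => /eqP ->; rewrite cT; lia.
- by apply: contraTN (rank_leq_col (colrows G T)) => /eqP ->; rewrite cT ltnn.
Qed.

Lemma generic_param_realization : @qp_realization d n H (mx_point G).
Proof.
move=> S; rewrite mx_pointK; split.
  move=> [T [sTS circuitT]]; apply: cols_dependentS sTS _.
  exact/cols_dependentP/generic_circuit_not_free.
move=> /cols_dependentP not_free; apply: NNPP => indepS.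
have := t_generic (inr S); rewrite /=.
by case: excluded_middle_informative => // _ /row_free_det_mul; rewrite (negbTE not_free).
Qed.

End GenericParameter.

Lemma genericity_somewhere i : triple_empty H -> qp_has_rank n H n ->
  exists t, genericity i t != 0.
Proof.
move=> tri rankH; case: i => [[A B]|S]; rewrite /genericity.
  have [/andP[AH BH]|_] := boolP ((A \in H) && (B \in H)); last first.
    by exists (fun=> 0); rewrite oner_neq0.
  have [_|AB] := eqVneq A B; first by exists (fun=> 1); rewrite mxE oner_neq0.
  have n_gt1 := qp_rank_gt1 rankH AH BH AB.
  pose P : 'M[C]_(1 + 1, n) := pid_mx 2.
  pose nu C := if C == A then usubmx P else dsubmx P.
  exists (mk_param nu (fun=> 0) (fun=> 0) (fun=> 0)).
  have BA : (B == A) = false by rewrite eq_sym (negbTE AB).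
  rewrite /normal_minor !normal_mk /nu eqxx BA vsubmxK.
  by rewrite pid_mx_id // pid_mx_1 det1 oner_neq0.
case: (excluded_middle_informative (indep S)) => [indepS|_] /=; last first.
  by exists (fun=> 0); rewrite oner_neq0.
have Sn : (#|S| <= n)%N by apply: rankH.2.
have [t tS] := weak_realization_param (ltn0Sn n') tri (weak_realization_coord_mx indepS Sn).
by exists t; rewrite /param_minor tS colrows_coord_mx pid_mx_id // pid_mx_1 det1 oner_neq0.
Qed.

Lemma horner_eval_comp (t : param_index d n -> {poly C}) z :
  (fun k => (t k).[z]) = horner_eval z \o t.
Proof. by apply: functional_extensionality => k; rewrite /= horner_evalE. Qed.

Lemma poly_on_lines_normal_coord A :
  poly_on_lines (fun t : param_index d n -> C => normal t A 0 ord0).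
Proof.
by apply: (poly_on_lines_horner (phip := fun t => normal t A 0 ord0)) => t z; rewrite !mxE.
Qed.

Lemma poly_on_lines_normal_minor A B : poly_on_lines (fun t => normal_minor t A B).
Proof.
apply: (poly_on_lines_horner (phip := fun t => normal_minor t A B)) => t z.
rewrite horner_eval_comp -horner_evalE /normal_minor -det_map_mx map_mxM map_col_mx.
by rewrite !map_normal map_pid_mx.
Qed.

Lemma poly_on_lines_param_minor S : poly_on_lines (fun t => param_minor t S).
Proof.
apply: (poly_on_lines_horner (phip := fun t => param_minor t S)) => t z.
rewrite horner_eval_comp -horner_evalE /param_minor -det_map_mx map_mxM map_colrows.
by rewrite map_param_mx map_pid_mx.
Qed.

Lemma poly_on_lines_genericity i : poly_on_lines (genericity i).
Proof.
case: i => [[A B]|S]; rewrite /genericity.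
  case: ((A \in H) && (B \in H)); last exact: poly_on_lines_cst.
  by case: (A == B); [apply: poly_on_lines_normal_coord | apply: poly_on_lines_normal_minor].
case: (excluded_middle_informative (indep S)) => _ /=.
  exact: poly_on_lines_param_minor.
exact: poly_on_lines_cst.
Qed.

Lemma poly_on_lines_eval_param (p : {mpoly C[n * d]}) :
  poly_on_lines (fun t => p.@[mx_point (param_mx H t)]).
Proof.
pose phip t := mmap polyC (fun k => mxvec (param_mx H t) 0 k) p.
apply: (poly_on_lines_horner (phip := phip)) => t z.
rewrite horner_mmap_polyC; congr meval; apply: functional_extensionality => k.
by rewrite /mx_point horner_eval_comp -map_param_mx -map_mxvec mxE /= horner_evalE.
Qed.

End Genericity.

Theorem corollary3p9 (d n : nat) (H : {set {set 'I_d}}) :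
  (0 < n)%N -> (n <= d)%N -> @triple_empty d H -> @qp_has_rank d n H n ->
  (exists x, @qp_realization d n H x) /\
  zariski_irreducible (zariski_closure (@qp_realization d n H)).
Proof.
case: n => [//|n] _ _ tri rankH.
have generic_real t := @generic_param_realization d n H tri rankH t.
have realization_onto x := @realization_param d n.+1 H x (ltn0Sn n) tri.
have cond_poly := @poly_on_lines_genericity d n H.
have cond_somewhere i := genericity_somewhere i tri rankH.
split; first exact: param_nonempty cond_poly cond_somewhere generic_real.
exact: zariski_irreducible_param_closure (@poly_on_lines_eval_param d n H)
  cond_poly cond_somewhere generic_real realization_onto.
Qed.
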